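(* For $i=1,2$ let $A_i\in M_{g_i,n_i}(\mathbb{Z})$ be a simple totally unimodular matrix and let $Q_i$ be a positive definite quadratic form of rank $g_i$ (a symmetric $g_i\times g_i$ real matrix) which is well-suited for $A_i$. Then $$Q=\begin{pmatrix}Q_1&0\\0&Q_2\end{pmatrix}\ \text{ is well-suited for }\ A=\begin{pmatrix}A_1&0\\0&A_2\end{pmatrix}.$$
   Context: A real matrix is totally unimodular if every square submatrix has determinant $-1,0$ or $1$; it is simple if it has no zero column and no two proportional columns. For a simple totally unimodular $A\in M_{g,n}(\mathbb{Z})$, a symmetric matrix $Q\in M_{g,g}(\mathbb{R})$ is well-suited for $A$ if $Q$ is positive definite and for every $\xi\in\mathbb{Z}^g\setminus\{0\}$ one has $Q(\xi)=\xi^tQ\xi\ge1$, with equality if and only if $\xi$ or $-\xi$ is a column vector of $A$. *)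

From HB Require Import structures.
From mathcomp Require Import all_boot all_order all_algebra.
From mathcomp Require Import reals.
Set Implicit Arguments. Unset Strict Implicit. Unset Printing Implicit Defensive.
Import Order.TTheory GRing.Theory Num.Theory.
Local Open Scope ring_scope.

Definition totally_unimodular (g n : nat) (A : 'M[int]_(g, n)) : Prop :=
  forall (k : nat) (f : 'I_k -> 'I_g) (h : 'I_k -> 'I_n),
    injective f -> injective h ->
    \det (mxsub f h A) \in [:: -1; 0; 1].

Definition simple_mx (g n : nat) (A : 'M[int]_(g, n)) : Prop :=
  (forall j : 'I_n, col j A != 0) /\
  (forall j j' : 'I_n, j != j' ->
     ~ exists c : rat, map_mx intr (col j A) = c *: map_mx intr (col j' A)).

Definition qform (R : realType) (g : nat) (Q : 'M[R]_g) (x : 'cV[R]_g) : R :=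
  (x^T *m Q *m x) 0 0.

Definition pos_def (R : realType) (g : nat) (Q : 'M[R]_g) : Prop :=
  forall x : 'cV[R]_g, x != 0 -> 0 < qform Q x.

Definition well_suited (R : realType) (g n : nat)
    (A : 'M[int]_(g, n)) (Q : 'M[R]_g) : Prop :=
  Q^T = Q /\ pos_def Q /\
  forall xi : 'cV[int]_g, xi != 0 ->
    1 <= qform Q (map_mx intr xi) /\
    (qform Q (map_mx intr xi) = 1 <->
       exists j : 'I_n, xi = col j A \/ - xi = col j A).

From HB Require Import structures.
From mathcomp Require Import all_boot all_order all_algebra.
From mathcomp Require Import reals.
Set Implicit Arguments. Unset Strict Implicit. Unset Printing Implicit Defensive.
Import Order.TTheory GRing.Theory Num.Theory.
Local Open Scope ring_scope.

(* For xi = (x1, x2) the form splits as Q1(x1) + Q2(x2), and the columns of the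
   block matrix are the columns of A1 and of A2 padded by zeros.  So if xi has a
   single nonzero block, both conditions reduce to those for Q_i and A_i; if
   both blocks are nonzero, Q(xi) >= 1 + 1 = 2 while xi is not (up to sign) a
   column of the block matrix. *)

Definition signed_col (g n : nat) (A : 'M[int]_(g, n)) (xi : 'cV[int]_g) : Prop :=
  exists j : 'I_n, xi = col j A \/ - xi = col j A.

Lemma qform0 (R : realType) g (Q : 'M[R]_g) : qform Q 0 = 0.
Proof. by rewrite /qform mulmx0 mxE. Qed.

Lemma qform_block_diag (R : realType) g1 g2 (Q1 : 'M[R]_g1) (Q2 : 'M[R]_g2)
    (x1 : 'cV[R]_g1) (x2 : 'cV[R]_g2) :
  qform (block_mx Q1 0 0 Q2) (col_mx x1 x2) = qform Q1 x1 + qform Q2 x2.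
Proof.
rewrite /qform tr_col_mx mul_row_block !mulmx0 addr0 add0r mul_row_col.
by rewrite mxE.
Qed.

Lemma pos_def_block_diag (R : realType) g1 g2 (Q1 : 'M[R]_g1) (Q2 : 'M[R]_g2) :
  pos_def Q1 -> pos_def Q2 -> pos_def (block_mx Q1 0 0 Q2).
Proof.
move=> P1 P2 x; rewrite -[x]vsubmxK col_mx_eq0 qform_block_diag.
case: (eqVneq (usubmx x) 0) => [->|nz1]; case: (eqVneq (dsubmx x) 0) => [->|nz2] //= _.
- by rewrite qform0 add0r; apply: P2.
- by rewrite qform0 addr0; apply: P1.
- by rewrite addr_gt0 ?P1 ?P2.
Qed.

Lemma signed_col_block_diag (g1 n1 g2 n2 : nat)
    (A1 : 'M[int]_(g1, n1)) (A2 : 'M[int]_(g2, n2))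
    (x1 : 'cV[int]_g1) (x2 : 'cV[int]_g2) :
  signed_col (block_mx A1 0 0 A2) (col_mx x1 x2) <->
  (signed_col A1 x1 /\ x2 = 0) \/ (x1 = 0 /\ signed_col A2 x2).
Proof.
rewrite /signed_col opp_col_mx; split.
  case=> j; rewrite block_mxEh.
  case: (split_ordP j) => k ->; rewrite ?colKl ?colKr col_col_mx col0.
    by case=> /eq_col_mx [-> /eqP]; rewrite ?oppr_eq0 => /eqP ->;
      left; split=> //; exists k; [left|right].
  by case=> /eq_col_mx [/eqP]; rewrite ?oppr_eq0 => /eqP -> ->;
    right; split=> //; exists k; [left|right].
case=> [[[k Ek] ->]|[-> [k Ek]]].
  exists (lshift n2 k); rewrite block_mxEh colKl col_col_mx col0 oppr0.
  by case: Ek => ->; [left|right].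
exists (rshift n1 k); rewrite block_mxEh colKr col_col_mx col0 oppr0.
by case: Ek => ->; [left|right].
Qed.

Lemma well_suited_block_diag (R : realType) (g1 n1 g2 n2 : nat)
    (A1 : 'M[int]_(g1, n1)) (A2 : 'M[int]_(g2, n2))
    (Q1 : 'M[R]_g1) (Q2 : 'M[R]_g2) :
  well_suited A1 Q1 -> well_suited A2 Q2 ->
  well_suited (block_mx A1 0 0 A2) (block_mx Q1 0 0 Q2).
Proof.
move=> [S1 [P1 W1]] [S2 [P2 W2]].
split; first by rewrite tr_block_mx S1 S2 !trmx0.
split; first exact: pos_def_block_diag.
move=> xi; rewrite -[xi]vsubmxK; move: (usubmx xi) (dsubmx xi) => x1 x2.
rewrite -[X in _ <-> X]/(signed_col _ _) signed_col_block_diag.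
rewrite col_mx_eq0 map_col_mx qform_block_diag.
case: (eqVneq x1 0) => [->|nz1]; case: (eqVneq x2 0) => [->|nz2] //= _.
- have [ge1 eq1] := W2 _ nz2; rewrite map_mx0 qform0 add0r eq1.
  split=> //; split=> [|[[_ /eqP]|[]//]]; first by right.
  by rewrite (negbTE nz2).
- have [ge1 eq1] := W1 _ nz1; rewrite map_mx0 qform0 addr0 eq1.
  split=> //; split=> [|[[]//|[/eqP]]]; first by left.
  by rewrite (negbTE nz1).
- have ge2 : 1 + 1 <= qform Q1 (map_mx intr x1) + qform Q2 (map_mx intr x2).
    by rewrite lerD ?(W1 _ nz1).1 ?(W2 _ nz2).1.
  split; first by apply: le_trans ge2; rewrite lerDl.
  split=> [eq1|[[_ /eqP]|[/eqP]]].
  + by move: ge2; rewrite eq1 gerDl ler10.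
  + by rewrite (negbTE nz2).
  + by rewrite (negbTE nz1).
Qed.

Theorem lemma4p2p3 (R : realType) (g1 n1 g2 n2 : nat)
  (A1 : 'M[int]_(g1, n1)) (A2 : 'M[int]_(g2, n2))
  (Q1 : 'M[R]_g1) (Q2 : 'M[R]_g2) :
  totally_unimodular A1 -> simple_mx A1 ->
  totally_unimodular A2 -> simple_mx A2 ->
  Q1^T = Q1 -> pos_def Q1 -> well_suited A1 Q1 ->
  Q2^T = Q2 -> pos_def Q2 -> well_suited A2 Q2 ->
  well_suited (block_mx A1 0 0 A2) (block_mx Q1 0 0 Q2).
Proof. by move=> _ _ _ _ _ _ W1 _ _ W2; apply: well_suited_block_diag. Qed.
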